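(* Let $(l_1:l_2:l_3:l_4)$ be a point on the tetragonal surface $\mathcal{K}^{\mathrm{Tet}}$ (over an algebraic closure of the base field). Then $K_2(l_1,l_2,l_3)=K_3(l_1,l_2,l_3)=K_4(l_1,l_2,l_3)=0$ if and only if $l_1=l_2=l_3=0$.
   Context: Let $k$ be a field of characteristic $\neq2,3$ and $\mu_1,\dots,\mu_4\in k$ nonzero squared theta constants with $\hat\mu_1=(\mu_1+\mu_2+\mu_3+\mu_4)/2$, $\hat\mu_2=(\mu_1+\mu_2-\mu_3-\mu_4)/2$, $\hat\mu_3=(\mu_1-\mu_2+\mu_3-\mu_4)/2$, $\hat\mu_4=(\mu_1-\mu_2-\mu_3+\mu_4)/2$ all nonzero, and $\mu_1\mu_4\neq\mu_2\mu_3$, $\mu_1\mu_3\neq\mu_2\mu_4$, $\mu_1\mu_2\neq\mu_3\mu_4$ (so that the associated squared Kummer surface is a genuine Kummer surface of a genus-2 Jacobian). Set $t=16\mu_1\mu_2\mu_3\mu_4\hat\mu_1\hat\mu_2\hat\mu_3\hat\mu_4$ and $r_1=(\mu_1\mu_3-\mu_2\mu_4)(\mu_1\mu_4-\mu_2\mu_3)$, $s_1=(\mu_1\mu_2-\mu_3\mu_4)(\mu_1\mu_2+\mu_3\mu_4)$, $r_2=(\mu_1\mu_2-\mu_3\mu_4)(\mu_1\mu_4-\mu_2\mu_3)$, $s_2=(\mu_1\mu_3-\mu_2\mu_4)(\mu_1\mu_3+\mu_2\mu_4)$, $r_3=(\mu_1\mu_2-\mu_3\mu_4)(\mu_1\mu_3-\mu_2\mu_4)$,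 $s_3=(\mu_1\mu_4-\mu_2\mu_3)(\mu_1\mu_4+\mu_2\mu_3)$. The tetragonal surface $\mathcal{K}^{\mathrm{Tet}}\subset\mathbb{P}^3$ is $4tL_1L_2L_3L_4=r_1^2(L_1L_2+L_3L_4)^2+r_2^2(L_1L_3+L_2L_4)^2+r_3^2(L_1L_4+L_2L_3)^2-2r_1s_1((L_1^2+L_2^2)L_3L_4+L_1L_2(L_3^2+L_4^2))-2r_2s_2((L_1^2+L_3^2)L_2L_4+L_1L_3(L_2^2+L_4^2))-2r_3s_3((L_1^2+L_4^2)L_2L_3+L_1L_4(L_2^2+L_3^2))$, which can be rewritten as $K_4-2K_3L_4+K_2L_4^2=0$ with $K_2=r_3^2L_1^2+r_2^2L_2^2+r_1^2L_3^2-2(r_3s_3L_2L_3+r_2s_2L_1L_3+r_1s_1L_1L_2)$, $K_3=r_1s_1(L_1^2+L_2^2)L_3+r_2s_2(L_1^2+L_3^2)L_2+r_3s_3(L_2^2+L_3^2)L_1+(2t-(r_1^2+r_2^2+r_3^2))L_1L_2L_3$, $K_4=r_3^2L_2^2L_3^2+r_2^2L_1^2L_3^2+r_1^2L_1^2L_2^2-2(r_3s_3L_1+r_2s_2L_2+r_1s_1L_3)L_1L_2L_3$. The vanishing of the homogeneous $K_i$ at a projective point does not depend on the representative. *)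

From HB Require Import structures.
From mathcomp Require Import all_boot all_order all_algebra.
Set Implicit Arguments. Unset Strict Implicit. Unset Printing Implicit Defensive.
Import Order.TTheory GRing.Theory.
Local Open Scope ring_scope.

Section Tet.
Variable F : fieldType.
Variables m1 m2 m3 m4 : F.

Definition muh1 : F := (m1 + m2 + m3 + m4) / 2%:R.
Definition muh2 : F := (m1 + m2 - m3 - m4) / 2%:R.
Definition muh3 : F := (m1 - m2 + m3 - m4) / 2%:R.
Definition muh4 : F := (m1 - m2 - m3 + m4) / 2%:R.

Definition tet_t : F := 16%:R * m1 * m2 * m3 * m4 * muh1 * muh2 * muh3 * muh4.

Definition tet_r1 : F := (m1 * m3 - m2 * m4) * (m1 * m4 - m2 * m3).
Definition tet_s1 : F := (m1 * m2 - m3 * m4) * (m1 * m2 + m3 * m4).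
Definition tet_r2 : F := (m1 * m2 - m3 * m4) * (m1 * m4 - m2 * m3).
Definition tet_s2 : F := (m1 * m3 - m2 * m4) * (m1 * m3 + m2 * m4).
Definition tet_r3 : F := (m1 * m2 - m3 * m4) * (m1 * m3 - m2 * m4).
Definition tet_s3 : F := (m1 * m4 - m2 * m3) * (m1 * m4 + m2 * m3).

Definition tet_eq (L1 L2 L3 L4 : F) : Prop :=
  4%:R * tet_t * L1 * L2 * L3 * L4 =
    tet_r1 ^+ 2 * (L1 * L2 + L3 * L4) ^+ 2
  + tet_r2 ^+ 2 * (L1 * L3 + L2 * L4) ^+ 2
  + tet_r3 ^+ 2 * (L1 * L4 + L2 * L3) ^+ 2
  - 2%:R * tet_r1 * tet_s1 * ((L1 ^+ 2 + L2 ^+ 2) * L3 * L4 + L1 * L2 * (L3 ^+ 2 + L4 ^+ 2))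
  - 2%:R * tet_r2 * tet_s2 * ((L1 ^+ 2 + L3 ^+ 2) * L2 * L4 + L1 * L3 * (L2 ^+ 2 + L4 ^+ 2))
  - 2%:R * tet_r3 * tet_s3 * ((L1 ^+ 2 + L4 ^+ 2) * L2 * L3 + L1 * L4 * (L2 ^+ 2 + L3 ^+ 2)).

Definition tet_K2 (L1 L2 L3 : F) : F :=
  tet_r3 ^+ 2 * L1 ^+ 2 + tet_r2 ^+ 2 * L2 ^+ 2 + tet_r1 ^+ 2 * L3 ^+ 2
  - 2%:R * (tet_r3 * tet_s3 * L2 * L3 + tet_r2 * tet_s2 * L1 * L3 + tet_r1 * tet_s1 * L1 * L2).

Definition tet_K3 (L1 L2 L3 : F) : F :=
  tet_r1 * tet_s1 * (L1 ^+ 2 + L2 ^+ 2) * L3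
  + tet_r2 * tet_s2 * (L1 ^+ 2 + L3 ^+ 2) * L2
  + tet_r3 * tet_s3 * (L2 ^+ 2 + L3 ^+ 2) * L1
  + (2%:R * tet_t - (tet_r1 ^+ 2 + tet_r2 ^+ 2 + tet_r3 ^+ 2)) * L1 * L2 * L3.

Definition tet_K4 (L1 L2 L3 : F) : F :=
  tet_r3 ^+ 2 * L2 ^+ 2 * L3 ^+ 2 + tet_r2 ^+ 2 * L1 ^+ 2 * L3 ^+ 2
  + tet_r1 ^+ 2 * L1 ^+ 2 * L2 ^+ 2
  - 2%:R * (tet_r3 * tet_s3 * L1 + tet_r2 * tet_s2 * L2 + tet_r1 * tet_s1 * L3) * L1 * L2 * L3.

End Tet.

From HB Require Import structures.
From mathcomp Require Import all_boot all_order all_algebra.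
From mathcomp Require Import ring.
Import GRing.Theory.
Set Implicit Arguments. Unset Strict Implicit.
Local Open Scope ring_scope.

(* Write A = m1 m2 - m3 m4, B = m1 m3 - m2 m4, C = m1 m4 - m2 m3, so that
   r1 = B C, r2 = A C, r3 = A B.  The discriminant K3^2 - K2 K4 equals
   4 m1 m2 m3 m4 A B C q(x, y) q'(x, z) q''(z, y), where
   q = A x^2 + (m1^2 + m2^2 - m3^2 - m4^2) x y + A y^2 and q', q'' are its
   images under the transpositions (m2 m3) and (m2 m4); these transpositions
   also fix K2, K3, K4 up to relabelling the variables, so at a common zero we
   may assume q(x, y) = 0.  There K2 = w(x, y, z)^2 for a linear form w, and
   since K4(x, y, z) = K2(yz, xz, xy), also K4 = w(yz, xz, xy)^2.  Finally
   t x y is a combination of q(x, y), w(x, y, z) and w(yz, xz, xy), so x y = 0;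
   then q(x, y) = 0 gives x = y = 0, and w = B C z gives z = 0. *)

Lemma sqr_add_mul_eq0 (R : idomainType) (x y : R) :
  x ^+ 2 + y ^+ 2 = 0 -> x * y = 0 -> x = 0 /\ y = 0.
Proof.
move=> hsum hxy.
have sqr_eq0 (a b : R) : a ^+ 2 + b ^+ 2 = 0 -> a * b = 0 -> a = 0.
  move=> hab hmul; have : a ^+ 4 = a ^+ 2 * (a ^+ 2 + b ^+ 2) - (a * b) ^+ 2 by ring.
  by rewrite hab hmul expr0n mulr0 subr0 => /eqP; rewrite expf_eq0 => /eqP.
split; first exact: sqr_eq0 hsum hxy.
by apply: (sqr_eq0 y x); [rewrite addrC | rewrite mulrC].
Qed.

Section TetForms.
Variables (F : fieldType) (m1 m2 m3 m4 : F).

Definition tet_A : F := m1 * m2 - m3 * m4.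
Definition tet_B : F := m1 * m3 - m2 * m4.
Definition tet_C : F := m1 * m4 - m2 * m3.

Definition tet_quad (x y : F) : F :=
  tet_A * x ^+ 2 + (m1 ^+ 2 + m2 ^+ 2 - m3 ^+ 2 - m4 ^+ 2) * x * y + tet_A * y ^+ 2.

Definition tet_lin (x y z : F) : F :=
  tet_B * tet_C * z - tet_A * ((m1 * m3 + m2 * m4) * x + (m1 * m4 + m2 * m3) * y).

Local Notation t := (tet_t m1 m2 m3 m4).
Local Notation K2 := (tet_K2 m1 m2 m3 m4).
Local Notation K4 := (tet_K4 m1 m2 m3 m4).

Lemma tet_tE : (2%:R : F) != 0 ->
  t = m1 * m2 * m3 * m4 * (m1 + m2 + m3 + m4) * (m1 + m2 - m3 - m4)
      * (m1 - m2 + m3 - m4) * (m1 - m2 - m3 + m4).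
Proof. by move=> h2; rewrite /tet_t /muh1 /muh2 /muh3 /muh4; field. Qed.

Lemma tet_t_neq0_4m : t != 0 -> 4%:R * (m1 * m2 * m3 * m4) != 0.
Proof.
have -> : t = 4%:R * (m1 * m2 * m3 * m4) * (4%:R * muh1 m1 m2 m3 m4 * muh2 m1 m2 m3 m4
                                            * muh3 m1 m2 m3 m4 * muh4 m1 m2 m3 m4).
  by rewrite /tet_t; ring.
by rewrite mulf_eq0 negb_or => /andP[].
Qed.

Lemma tet_K2_decomp x y z :
  K2 x y z = tet_lin x y z ^+ 2 - 4%:R * (m1 * m2 * m3 * m4) * tet_A * tet_quad x y.
Proof.
rewrite /tet_K2 /tet_r1 /tet_r2 /tet_r3 /tet_s1 /tet_s2 /tet_s3.
by rewrite /tet_lin /tet_quad /tet_A /tet_B /tet_C; ring.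
Qed.

Lemma tet_K4_cremona x y z : K4 x y z = K2 (y * z) (x * z) (x * y).
Proof. by rewrite /tet_K4 /tet_K2; ring. Qed.

Lemma tet_K4_decomp x y z :
  K4 x y z = tet_lin (y * z) (x * z) (x * y) ^+ 2
             - 4%:R * (m1 * m2 * m3 * m4) * tet_A * z ^+ 2 * tet_quad x y.
Proof. by rewrite tet_K4_cremona tet_K2_decomp /tet_quad; ring. Qed.

Lemma tet_t_mulE x y z : (2%:R : F) != 0 ->
  t * (x * y) = tet_A * (m1 * m3 + m2 * m4) * (m1 * m4 + m2 * m3) * tet_quad x y
    + tet_A * ((m1 * m4 + m2 * m3) * x + (m1 * m3 + m2 * m4) * y) * tet_lin x y z
    + tet_B * tet_C * tet_lin (y * z) (x * z) (x * y).
Proof.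
move=> h2; rewrite tet_tE //.
by rewrite /tet_lin /tet_quad /tet_A /tet_B /tet_C; ring.
Qed.

Hypotheses (h2 : (2%:R : F) != 0) (ht : t != 0)
  (hABC : tet_A * tet_B * tet_C != 0).

Lemma tet_K24_quad_eq0 x y z :
  K2 x y z = 0 -> K4 x y z = 0 -> tet_quad x y = 0 -> [/\ x = 0, y = 0 & z = 0].
Proof.
move=> hK2 hK4 hq.
have [hA hBC] : tet_A != 0 /\ tet_B * tet_C != 0.
  by move: hABC; rewrite -mulrA mulf_eq0 negb_or => /andP[].
have hw : tet_lin x y z = 0.
  by move: hK2; rewrite tet_K2_decomp hq mulr0 subr0 => /eqP; rewrite expf_eq0 => /eqP.
have hw' : tet_lin (y * z) (x * z) (x * y) = 0.
  by move: hK4; rewrite tet_K4_decomp hq mulr0 subr0 => /eqP; rewrite expf_eq0 => /eqP.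
have hxy : x * y = 0.
  move: (tet_t_mulE x y z h2); rewrite hq hw hw' !mulr0 !addr0 => /eqP.
  by rewrite mulf_eq0 (negbTE ht) => /eqP.
have hsum : x ^+ 2 + y ^+ 2 = 0.
  have : tet_A * (x ^+ 2 + y ^+ 2)
         = tet_quad x y - (m1 ^+ 2 + m2 ^+ 2 - m3 ^+ 2 - m4 ^+ 2) * (x * y).
    by rewrite /tet_quad; ring.
  by rewrite hq hxy mulr0 subr0 => /eqP; rewrite mulf_eq0 (negbTE hA) => /eqP.
have [hx hy] := sqr_add_mul_eq0 hsum hxy.
split=> //; move: hw; rewrite /tet_lin hx hy !(mulr0, addr0, subr0) => /eqP.
by rewrite mulf_eq0 (negbTE hBC) => /eqP.
Qed.

End TetForms.

Section TetPermutations.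
Variables (F : fieldType) (m1 m2 m3 m4 : F).

Lemma tet_t_perm23 : tet_t m1 m3 m2 m4 = tet_t m1 m2 m3 m4.
Proof. by rewrite /tet_t /muh1 /muh2 /muh3 /muh4; ring. Qed.

Lemma tet_t_perm24 : tet_t m1 m4 m3 m2 = tet_t m1 m2 m3 m4.
Proof. by rewrite /tet_t /muh1 /muh2 /muh3 /muh4; ring. Qed.

Lemma tet_ABC_perm23 :
  tet_A m1 m3 m2 m4 * tet_B m1 m3 m2 m4 * tet_C m1 m3 m2 m4
  = tet_A m1 m2 m3 m4 * tet_B m1 m2 m3 m4 * tet_C m1 m2 m3 m4.
Proof. by rewrite /tet_A /tet_B /tet_C; ring. Qed.

Lemma tet_ABC_perm24 :
  tet_A m1 m4 m3 m2 * tet_B m1 m4 m3 m2 * tet_C m1 m4 m3 m2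
  = tet_A m1 m2 m3 m4 * tet_B m1 m2 m3 m4 * tet_C m1 m2 m3 m4.
Proof. by rewrite /tet_A /tet_B /tet_C; ring. Qed.

Lemma tet_K2_perm23 x y z : tet_K2 m1 m3 m2 m4 x z y = tet_K2 m1 m2 m3 m4 x y z.
Proof.
by rewrite /tet_K2 /tet_r1 /tet_r2 /tet_r3 /tet_s1 /tet_s2 /tet_s3; ring.
Qed.

Lemma tet_K2_perm24 x y z : tet_K2 m1 m4 m3 m2 z y x = tet_K2 m1 m2 m3 m4 x y z.
Proof.
by rewrite /tet_K2 /tet_r1 /tet_r2 /tet_r3 /tet_s1 /tet_s2 /tet_s3; ring.
Qed.

Lemma tet_K4_perm23 x y z : tet_K4 m1 m3 m2 m4 x z y = tet_K4 m1 m2 m3 m4 x y z.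
Proof. by rewrite !tet_K4_cremona tet_K2_perm23 [z * y]mulrC [x * y]mulrC. Qed.

Lemma tet_K4_perm24 x y z : tet_K4 m1 m4 m3 m2 z y x = tet_K4 m1 m2 m3 m4 x y z.
Proof. by rewrite !tet_K4_cremona tet_K2_perm24 [y * x]mulrC [z * x]mulrC [z * y]mulrC. Qed.

Lemma tet_K3_disc x y z : (2%:R : F) != 0 ->
  tet_K3 m1 m2 m3 m4 x y z ^+ 2 - tet_K2 m1 m2 m3 m4 x y z * tet_K4 m1 m2 m3 m4 x y z
  = 4%:R * (m1 * m2 * m3 * m4) * (tet_A m1 m2 m3 m4 * tet_B m1 m2 m3 m4 * tet_C m1 m2 m3 m4)
    * (tet_quad m1 m2 m3 m4 x y * tet_quad m1 m3 m2 m4 x z * tet_quad m1 m4 m3 m2 z y).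
Proof.
move=> h2; rewrite /tet_K3 tet_tE // /tet_K2 /tet_K4.
rewrite /tet_r1 /tet_r2 /tet_r3 /tet_s1 /tet_s2 /tet_s3 /tet_quad /tet_A /tet_B /tet_C.
ring.
Qed.

End TetPermutations.

Lemma tet_K_eq0 (F : fieldType) (m1 m2 m3 m4 x y z : F) :
  (2%:R : F) != 0 -> tet_t m1 m2 m3 m4 != 0 ->
  tet_A m1 m2 m3 m4 * tet_B m1 m2 m3 m4 * tet_C m1 m2 m3 m4 != 0 ->
  tet_K2 m1 m2 m3 m4 x y z = 0 -> tet_K3 m1 m2 m3 m4 x y z = 0 ->
  tet_K4 m1 m2 m3 m4 x y z = 0 -> [/\ x = 0, y = 0 & z = 0].
Proof.
move=> h2 ht hABC hK2 hK3 hK4.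
have := tet_K3_disc m1 m2 m3 m4 x y z h2; rewrite hK2 hK3 hK4 expr0n mul0r subr0 => /esym/eqP.
rewrite mulf_eq0 mulf_eq0 (negbTE (tet_t_neq0_4m ht)) (negbTE hABC) /=.
rewrite !mulf_eq0 => /orP[/orP[]|] /eqP hq.
- exact: (tet_K24_quad_eq0 h2 ht hABC hK2 hK4 hq).
- rewrite -tet_t_perm23 in ht; rewrite -tet_ABC_perm23 in hABC.
  rewrite -tet_K2_perm23 in hK2; rewrite -tet_K4_perm23 in hK4.
  by case: (tet_K24_quad_eq0 h2 ht hABC hK2 hK4 hq) => -> -> ->.
- rewrite -tet_t_perm24 in ht; rewrite -tet_ABC_perm24 in hABC.
  rewrite -tet_K2_perm24 in hK2; rewrite -tet_K4_perm24 in hK4.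
  by case: (tet_K24_quad_eq0 h2 ht hABC hK2 hK4 hq) => -> -> ->.
Qed.

Lemma rmorph_tet_t (k L : fieldType) (f : {rmorphism k -> L}) (m1 m2 m3 m4 : k) :
  f (tet_t m1 m2 m3 m4) = tet_t (f m1) (f m2) (f m3) (f m4).
Proof.
by rewrite /tet_t /muh1 /muh2 /muh3 /muh4 !(rmorph_nat, rmorphM, rmorphD, rmorphN, fmorphV).
Qed.

Theorem lemma1 (k : fieldType) (L : closedFieldType) (iota : {rmorphism k -> L})
  (m1 m2 m3 m4 : k)
  (hchar2 : (2%:R : k) != 0) (hchar3 : (3%:R : k) != 0)
  (hm1 : m1 != 0) (hm2 : m2 != 0) (hm3 : m3 != 0) (hm4 : m4 != 0)
  (hh1 : muh1 m1 m2 m3 m4 != 0) (hh2 : muh2 m1 m2 m3 m4 != 0)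
  (hh3 : muh3 m1 m2 m3 m4 != 0) (hh4 : muh4 m1 m2 m3 m4 != 0)
  (hd1 : m1 * m4 != m2 * m3) (hd2 : m1 * m3 != m2 * m4) (hd3 : m1 * m2 != m3 * m4)
  (l1 l2 l3 l4 : L)
  (hnz : ~ [/\ l1 = 0, l2 = 0, l3 = 0 & l4 = 0])
  (hon : tet_eq (iota m1) (iota m2) (iota m3) (iota m4) l1 l2 l3 l4) :
  [/\ tet_K2 (iota m1) (iota m2) (iota m3) (iota m4) l1 l2 l3 = 0,
      tet_K3 (iota m1) (iota m2) (iota m3) (iota m4) l1 l2 l3 = 0
    & tet_K4 (iota m1) (iota m2) (iota m3) (iota m4) l1 l2 l3 = 0]
  <-> [/\ l1 = 0, l2 = 0 & l3 = 0].
Proof.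
split=> [[hK2 hK3 hK4] | [-> -> ->]]; last first.
  by rewrite /tet_K2 /tet_K3 /tet_K4; split; ring.
apply: tet_K_eq0 hK2 hK3 hK4.
- by rewrite -(rmorph_nat iota) fmorph_eq0.
- rewrite -rmorph_tet_t fmorph_eq0 /tet_t; do 8 (apply: mulf_neq0 => //).
  by rewrite (_ : 16 = 2 ^ 4)%N // natrX expf_neq0.
- rewrite /tet_A /tet_B /tet_C !mulf_neq0 //.
  all: by rewrite -!rmorphM -rmorphB fmorph_eq0 subr_eq0.
Qed.
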